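(* Let $P=\{\pi=(\pi_0,\dots,\pi_c)\in(0,\infty)^{c+1}:\ \sum_{j=0}^c\pi_j=1,\ (c-j+1)\pi_{j-1}\le \lambda d\,\pi_j \text{ for all } j\in\{1,\dots,c\}\}$ and, for $\pi\in P$, let $$\Pi(\pi)=\sum_{j=1}^c \pi_j\,\lambda\, g\!\left(\frac{(c-j+1)\,\pi_{j-1}}{\lambda d\,\pi_j}\right).$$ Then $P$ is convex and $\Pi$ is concave on $P$. Moreover, for every $\pi\in P$, setting $x_j=\frac{(c-j+1)\pi_{j-1}}{\lambda d\pi_j}$ for $j=1,\dots,c$ defines a stock-dependent policy $\mathbf x\in(0,1]^c$ whose steady-state distribution is $\pi$ and whose long-run average reward is $\mathcal R(\mathbf x)=\Pi(\pi)$; thus maximizing over stock-dependent policies with strictly positive steady-state probabilities is a convex program in $\pi$.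
   Context: Setting. Fix $c\in\mathbb N$ (number of identical units of a single reusable resource), an arrival rate $\lambda>0$ and a mean usage duration $d>0$, with $x^*:=c/(\lambda d)\in(0,1)$. Let $g:[0,1]\to\mathbb R$ be concave, non-decreasing, with $g(0)=0$ (the reward function; $\partial g(x)$ denotes its set of supergradients at $x$). A stock-dependent policy is a vector $\mathbf x=(x_1,\dots,x_c)\in[0,1]^c$, where $x_j$ is the admission probability used when exactly $j$ units are available (the admission probability is $0$ when no unit is available). Its steady-state distribution is the unique probability vector $\pi=(\pi_0,\dots,\pi_c)$ satisfying $\pi_j\lambda x_j=\pi_{j-1}(c-j+1)/d$ for all $j\in\{1,\dots,c\}$ (by an insensitivity result, for any usage-duration distribution with mean $d$, $\pi_j$ is the long-run fraction of time with exactly $j$ units available), and its long-run average reward is $\mathcal R(\mathbf x)=\sum_{j=1}^c\pi_j\lambda g(x_j)$. *)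

From HB Require Import structures.
From mathcomp Require Import all_boot all_order all_algebra.
From mathcomp Require Import boolp classical_sets reals.
Set Implicit Arguments. Unset Strict Implicit. Unset Printing Implicit Defensive.
Import Order.TTheory GRing.Theory Num.Theory.
Local Open Scope ring_scope.
Local Open Scope classical_set_scope.

Section Defs.
Variable R : realType.

(* Indexing conventions:
   - a distribution pi = (pi_0,...,pi_c) is a function 'I_c.+1 -> R;
   - a stock-dependent policy x = (x_1,...,x_c) is a function 'I_c -> R,
     where x i (i : 'I_c) stands for x_{i+1}.
   For i : 'I_c, with j = i+1: pi_j = pi (inord i.+1), pi_{j-1} = pi (inord i),
   and c - j + 1 = c - i. *)

Definition concave_on01 (g : R -> R) : Prop :=
  forall x y t : R, 0 <= x <= 1 -> 0 <= y <= 1 -> 0 <= t <= 1 ->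
    t * g x + (1 - t) * g y <= g (t * x + (1 - t) * y).

Definition nondecreasing_on01 (g : R -> R) : Prop :=
  forall x y : R, 0 <= x <= 1 -> 0 <= y <= 1 -> x <= y -> g x <= g y.

Definition policy (c : nat) (x : 'I_c -> R) : Prop :=
  forall i, 0 <= x i <= 1.

Definition is_steady_state (c : nat) (lam d : R) (x : 'I_c -> R)
    (pi : 'I_c.+1 -> R) : Prop :=
  (forall j, 0 <= pi j) /\ \sum_(j < c.+1) pi j = 1 /\
  forall i : 'I_c,
    pi (inord i.+1) * lam * x i = pi (inord i) * (c - i)%N%:R / d.

Definition steady_state (c : nat) (lam d : R) (x : 'I_c -> R) : 'I_c.+1 -> R :=
  xget (fun _ => 0) [set pi | @is_steady_state c lam d x pi].

Definition avg_reward (c : nat) (lam d : R) (g : R -> R) (x : 'I_c -> R) : R :=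
  \sum_(i < c) @steady_state c lam d x (inord i.+1) * lam * g (x i).

Definition Pset (c : nat) (lam d : R) : set ('I_c.+1 -> R) :=
  [set pi | (forall j, 0 < pi j) /\ \sum_(j < c.+1) pi j = 1 /\
     forall i : 'I_c, (c - i)%N%:R * pi (inord i) <= lam * d * pi (inord i.+1)].

Definition policy_of (c : nat) (lam d : R) (pi : 'I_c.+1 -> R) : 'I_c -> R :=
  fun i => (c - i)%N%:R * pi (inord i) / (lam * d * pi (inord i.+1)).

Definition PiR (c : nat) (lam d : R) (g : R -> R) (pi : 'I_c.+1 -> R) : R :=
  \sum_(i < c) pi (inord i.+1) * lam * g (@policy_of c lam d pi i).

Definition convex_comb (c : nat) (t : R) (p q : 'I_c.+1 -> R) : 'I_c.+1 -> R :=
  fun j => t * p j + (1 - t) * q j.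

End Defs.

From HB Require Import structures.
From mathcomp Require Import all_boot all_order all_algebra.
From mathcomp Require Import boolp classical_sets reals.
From mathcomp Require Import ring lra.
Import Order.TTheory GRing.Theory Num.Theory.
Local Open Scope ring_scope.
Local Open Scope classical_set_scope.

(* 1. Convexity of P: positivity and normalisation are preserved by convex
      combinations, and so is every linear constraint a * u <= b * v.
   2. For pi in P, the induced policy x_j = (c-j+1) pi_{j-1} / (lam d pi_j)
      lies in (0,1] (this is the defining inequality of P) and pi satisfies
      the balance equations of x.  Balance equations with nonzero admission
      probabilities determine a distribution up to scaling (cross ratios
      y_j pi_0 = pi_j y_0), so the normalisation makes pi THE steady state;
      hence R(x) = Pi(pi).
   3. Concavity of Pi: the j-th term of Pi is lam times the perspective
      (z, u) |-> z g(u / z) of g evaluated at z = pi_j, u = pi_j x_j, and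
      u is linear in pi.  The perspective of a concave function is concave,
      which gives concavity term by term. *)

(* The perspective of a concave function is concave: with Z the weighted
   mean of z1, z2, the weighted mean of z_k g(w_k) is at most Z g(w), where
   w is the z-weighted mean of w1, w2. *)
Lemma concave_perspective (R : realType) (g : R -> R) (z1 z2 w1 w2 t : R) :
  concave_on01 g -> 0 < z1 -> 0 < z2 -> 0 <= w1 <= 1 -> 0 <= w2 <= 1 ->
  0 <= t <= 1 ->
  t * (z1 * g w1) + (1 - t) * (z2 * g w2) <=
  (t * z1 + (1 - t) * z2) *
    g ((t * z1 * w1 + (1 - t) * z2 * w2) / (t * z1 + (1 - t) * z2)).
Proof.
move=> gconc z1p z2p hw1 hw2 /andP[t0 t1].
set Z := t * z1 + (1 - t) * z2.
have Zp : 0 < Z by rewrite /Z; nra.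
have Zn : Z != 0 by rewrite gt_eqF.
pose mu := t * z1 / Z.
have mu01 : 0 <= mu <= 1.
  apply/andP; split; first by rewrite /mu divr_ge0 ?mulr_ge0 // ltW.
  by rewrite /mu ler_pdivrMr // mul1r /Z; nra.
have mu_compl : 1 - mu = (1 - t) * z2 / Z by rewrite /mu /Z; field; rewrite -/Z.
have mean_w : mu * w1 + (1 - mu) * w2 = (t * z1 * w1 + (1 - t) * z2 * w2) / Z.
  by rewrite mu_compl /mu; field.
have mean_g : Z * (mu * g w1 + (1 - mu) * g w2) =
    t * (z1 * g w1) + (1 - t) * (z2 * g w2).
  by rewrite mu_compl /mu; field.
by rewrite -mean_g -mean_w ler_pM2l //; apply: gconc.
Qed.
Arguments concave_perspective {R g z1 z2 w1 w2 t}.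

Section SteadyStates.
Variables (R : realType) (c : nat) (lam d : R).
Hypotheses (hlam : 0 < lam) (hd : 0 < d).

Lemma convex_comb_le (a b u1 u2 v1 v2 t : R) :
  a * u1 <= b * v1 -> a * u2 <= b * v2 -> 0 <= t <= 1 ->
  a * (t * u1 + (1 - t) * u2) <= b * (t * v1 + (1 - t) * v2).
Proof.
move=> h1 h2 /andP[t0 t1].
have h1t := ler_wpM2l t0 h1.
have h2t : 0 <= 1 - t by lra.
have := ler_wpM2l h2t h2.
nra.
Qed.

Lemma Pset_convex (p q : 'I_c.+1 -> R) (t : R) :
  Pset lam d p -> Pset lam d q -> 0 <= t <= 1 -> Pset lam d (convex_comb t p q).
Proof.
move=> [pp [ps pbal]] [qp [qs qbal]] ht; rewrite /convex_comb.
split; [|split].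
- by move=> j; have := pp j; have := qp j; case/andP: ht => ? ?; nra.
- by rewrite big_split /= -!mulr_sumr ps qs; ring.
- by move=> i; apply: convex_comb_le.
Qed.
Arguments Pset_convex {p q t}.

Lemma balance_cross_ratio (x : 'I_c -> R) (y pi : 'I_c.+1 -> R) :
  (forall i, x i != 0) ->
  (forall i : 'I_c, y (inord i.+1) * lam * x i = y (inord i) * (c - i)%N%:R / d) ->
  (forall i : 'I_c, pi (inord i.+1) * lam * x i = pi (inord i) * (c - i)%N%:R / d) ->
  forall j, (j <= c)%N -> y (inord j) * pi (inord 0) = pi (inord j) * y (inord 0).
Proof.
move=> xn0 ybal pibal; elim=> [|j IH] hj; first by rewrite mulrC.
pose i := Ordinal (hj : (j < c)%N).
have lx : lam * x i != 0 by rewrite mulf_neq0 ?xn0 // lt0r_neq0.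
have step (z : 'I_c.+1 -> R) :
    (forall i : 'I_c, z (inord i.+1) * lam * x i = z (inord i) * (c - i)%N%:R / d) ->
    z (inord j.+1) * (lam * x i) = z (inord j) * ((c - j)%N%:R / d).
  by move=> zbal; rewrite mulrA (zbal i) mulrA.
move: ((c - j)%N%:R / d) (step y ybal) (step pi pibal) (IH (ltnW hj)).
move=> k ystep pistep {}IH.
apply: (mulIf lx).
transitivity (pi (inord 0) * (y (inord j.+1) * (lam * x i))); first by ring.
rewrite ystep.
transitivity (k * (y (inord j) * pi (inord 0))); first by ring.
rewrite IH.
transitivity (y (inord 0) * (pi (inord j) * k)); first by ring.
by rewrite -pistep; ring.
Qed.

Lemma steady_state_eq (x : 'I_c -> R) (pi : 'I_c.+1 -> R) :
  (forall i, x i != 0) -> pi (inord 0) != 0 ->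
  is_steady_state lam d x pi -> steady_state lam d x = pi.
Proof.
move=> xn0 pi0 hpi; apply: xget_unique => // y [_ [ys ybal]].
have [_ [ps pibal]] := hpi.
have cross j : y j * pi (inord 0) = pi j * y (inord 0).
  by rewrite -[j]inord_val; exact: balance_cross_ratio xn0 ybal pibal _ (ltn_ord j).
have y0 : y (inord 0) = pi (inord 0).
  rewrite -[y (inord 0)]mulr1 -ps mulr_sumr -[pi (inord 0)]mulr1 -ys mulr_sumr.
  by apply: eq_bigr => j _; rewrite [RHS]mulrC cross mulrC.
by apply: funext => j; apply: (mulIf pi0); rewrite cross y0 mulrC.
Qed.

Lemma policy_of_range (p : 'I_c.+1 -> R) :
  Pset lam d p -> forall i, 0 < policy_of lam d p i <= 1.
Proof.
move=> [pp [_ pbal]] i.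
have den : 0 < lam * d * p (inord i.+1) by rewrite !mulr_gt0.
have ci : 0 < (c - i)%N%:R :> R by rewrite ltr0n subn_gt0.
rewrite /policy_of ler_pdivrMr // mul1r pbal andbT.
by rewrite divr_gt0 ?mulr_gt0.
Qed.
Arguments policy_of_range {p}.

Lemma Pset_steady_state (pi : 'I_c.+1 -> R) :
  Pset lam d pi -> is_steady_state lam d (policy_of lam d pi) pi.
Proof.
move=> [pp [ps _]]; split; first by move=> j; exact: ltW.
split=> // i; rewrite /policy_of.
by field; rewrite !gt_eqF.
Qed.

Lemma policy_of_convex_comb (p q : 'I_c.+1 -> R) (t : R) (i : 'I_c) :
  convex_comb t p q (inord i.+1) != 0 -> p (inord i.+1) != 0 ->
  q (inord i.+1) != 0 ->
  policy_of lam d (convex_comb t p q) i =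
  (t * p (inord i.+1) * policy_of lam d p i +
   (1 - t) * q (inord i.+1) * policy_of lam d q i) /
  (t * p (inord i.+1) + (1 - t) * q (inord i.+1)).
Proof.
rewrite /policy_of /convex_comb => hZ hp hq.
by field; rewrite hZ hp hq !gt_eqF.
Qed.

(* Pi is concave on P, term by term via the perspective of g. *)
Lemma PiR_concave (g : R -> R) (p q : 'I_c.+1 -> R) (t : R) :
  concave_on01 g -> Pset lam d p -> Pset lam d q -> 0 <= t <= 1 ->
  t * PiR lam d g p + (1 - t) * PiR lam d g q <= PiR lam d g (convex_comb t p q).
Proof.
move=> gconc hp hq ht.
have [pqp _] := Pset_convex hp hq ht.
have [[pp _] [qp _]] := (hp, hq).
rewrite /PiR !mulr_sumr -big_split; apply: ler_sum => i _ /=.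
have xp : 0 <= policy_of lam d p i <= 1.
  by case/andP: (policy_of_range hp i) => /ltW -> ->.
have xq : 0 <= policy_of lam d q i <= 1.
  by case/andP: (policy_of_range hq i) => /ltW -> ->.
rewrite policy_of_convex_comb ?gt_eqF //.
have := concave_perspective gconc (pp (inord i.+1)) (qp (inord i.+1)) xp xq ht.
move=> /(ler_wpM2r (ltW hlam)); rewrite /convex_comb.
by congr (_ <= _); ring.
Qed.

Lemma induced_policy (g : R -> R) (p : 'I_c.+1 -> R) :
  Pset lam d p ->
  let x := policy_of lam d p in
  (forall i, 0 < x i <= 1) /\
  steady_state lam d x = p /\
  avg_reward lam d g x = PiR lam d g p.
Proof.
move=> hp x; have xrange := policy_of_range hp.
have xss : steady_state lam d x = p.
  apply: steady_state_eq; last exact: Pset_steady_state.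
  - by move=> i; case/andP: (xrange i) => /lt0r_neq0.
  - by have [pp _] := hp; rewrite lt0r_neq0.
by split=> //; split=> //; rewrite /avg_reward xss.
Qed.

End SteadyStates.

Theorem proposition2 (R : realType) (c : nat) (lam d : R) (g : R -> R)
  (hlam : 0 < lam) (hd : 0 < d)
  (hxstar : 0 < c%:R / (lam * d) < 1)
  (hgconc : concave_on01 g) (hgmono : nondecreasing_on01 g) (hg0 : g 0 = 0) :
  (* P is convex *)
  (forall (p q : 'I_c.+1 -> R) (t : R), @Pset R c lam d p -> @Pset R c lam d q ->
     0 <= t <= 1 -> @Pset R c lam d (convex_comb t p q)) /\
  (* Pi is concave on P *)
  (forall (p q : 'I_c.+1 -> R) (t : R), @Pset R c lam d p -> @Pset R c lam d q ->
     0 <= t <= 1 ->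
     t * PiR lam d g p + (1 - t) * PiR lam d g q
       <= PiR lam d g (convex_comb t p q)) /\
  (* the induced policy *)
  (forall pi : 'I_c.+1 -> R, @Pset R c lam d pi ->
     let x := policy_of lam d pi in
     (forall i, 0 < x i <= 1) /\
     steady_state lam d x = pi /\
     avg_reward lam d g x = PiR lam d g pi).
Proof.
split; first by move=> p q t; exact: Pset_convex.
split; first by move=> p q t; exact: PiR_concave.
by move=> pi; exact: induced_policy.
Qed.
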